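(* Let $0<\eta<1$, $\gamma_0=0$ and $\gamma_j=(1+\eta\gamma_{j-1}^2)/2$ for $j\ge1$. Let $I_0=(0,1/4]$, and for $k\ge1$, $I_k=(\alpha_k,\beta_k]$ with $\alpha_k=2\gamma_{k+1}-1$, $\beta_k=\gamma_k^2$; for $j\ge0$ let $J_j=(\gamma_j,\gamma_{j+1}]$. Then there is no pair $(k,j)$ with $J_j\subset I_k$. Consequently each interval $I_k$ meets at most two of the intervals $J_j$.
   Context: Intervals $(a,b]$ are open on the left and closed on the right. *)

From HB Require Import structures.
From mathcomp Require Import all_boot all_order all_algebra.
From mathcomp Require Import boolp classical_sets reals.
Set Implicit Arguments. Unset Strict Implicit. Unset Printing Implicit Defensive.
Import Order.TTheory GRing.Theory Num.Theory.
Local Open Scope ring_scope.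
Local Open Scope classical_set_scope.

Fixpoint gamma {R : realType} (eta : R) (j : nat) : R :=
  match j with
  | O => 0
  | S j' => (1 + eta * (gamma eta j') ^+ 2) / 2
  end.

Definition alpha {R : realType} (eta : R) (k : nat) : R := 2 * gamma eta k.+1 - 1.
Definition beta {R : realType} (eta : R) (k : nat) : R := (gamma eta k) ^+ 2.

Definition ocint {R : realType} (a b : R) : set R := [set x | a < x /\ x <= b].

Definition Iint {R : realType} (eta : R) (k : nat) : set R :=
  if k is O then ocint 0 (1 / 4) else ocint (alpha eta k) (beta eta k).

Definition Jint {R : realType} (eta : R) (j : nat) : set R :=
  ocint (gamma eta j) (gamma eta j.+1).

(** The recursion is increasing on [0, 1), so every [J_j] has positive length.
    For [k >= 1] write [c = gamma_k]; then [alpha_k = eta c^2] and [beta_k = c^2].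
    If [J_j] sat inside [I_k] we would get [eta c^2 <= gamma_j] and
    [gamma_(j+1) <= c^2], hence [2 c^2 - 1 >= eta^3 c^4]. But [gamma_(k+1) > c]
    says [2 c - 1 < eta c^2], and cubing this together with the polynomial bound
    [c^2 (2 c^2 - 1) <= (2 c - 1)^3] on [[1/2, 1]] gives the opposite strict
    inequality. [I_0] is too short since [gamma_(j+1) >= 1/2]. An interval [I_k]
    meeting [J_j1] and [J_j3] contains every [J_j2] in between, so it can meet
    at most two of them. *)
From HB Require Import structures.
From mathcomp Require Import all_boot all_order all_algebra.
From mathcomp Require Import boolp classical_sets reals.
From mathcomp Require Import ring lra.
Import Order.TTheory GRing.Theory Num.Theory.
Local Open Scope ring_scope.
Local Open Scope classical_set_scope.

Lemma subset_ocint {R : realType} (a b x y : R) :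
  a <= x -> y <= b -> ocint x y `<=` ocint a b.
Proof. by move=> ax yb z [xz zy]; split; [apply: le_lt_trans xz|apply: le_trans yb]. Qed.

Lemma ocint_subset_bounds {R : realType} {a b x y : R} :
  x < y -> ocint x y `<=` ocint a b -> a <= x /\ y <= b.
Proof.
move=> xy sub; split; last by have [] := sub y (conj xy (lexx y)).
rewrite leNgt; apply/negP => xa.
have [] := sub (Num.min y a); first by split; rewrite ?lt_min ?xy ?xa ?ge_min ?lexx.
by rewrite lt_min ltxx andbF.
Qed.

Lemma cube_twice_sub1_ge (R : realFieldType) (c : R) : 1 / 2 <= c <= 1 ->
  c ^+ 2 * (2 * c ^+ 2 - 1) <= (2 * c - 1) ^+ 3.
Proof.
move=> /andP[c_ge c_le]; rewrite -subr_ge0.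
have -> : (2 * c - 1) ^+ 3 - c ^+ 2 * (2 * c ^+ 2 - 1)
          = (c - 1) ^+ 2 * (2 * c * (2 - c) - 1) by ring.
by rewrite mulr_ge0 ?sqr_ge0 //; nra.
Qed.

Section Gamma.
Variables (R : realType) (eta : R).
Hypotheses (eta_gt0 : 0 < eta) (eta_lt1 : eta < 1).

Local Notation gamma := (gamma eta).

Lemma gammaS j : gamma j.+1 = (1 + eta * gamma j ^+ 2) / 2.
Proof. by []. Qed.

Lemma gamma_ge0 j : 0 <= gamma j.
Proof.
case: j => [|j] //=; apply: divr_ge0 => //.
by rewrite addr_ge0 // mulr_ge0 ?sqr_ge0 ?ltW.
Qed.

Lemma gamma_lt1 j : gamma j < 1.
Proof.
elim: j => [|j IH]; first exact: ltr01.
have g_ge0 := gamma_ge0 j.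
have sq_le1 : gamma j ^+ 2 <= 1 by rewrite expr2; nra.
have : eta * gamma j ^+ 2 <= eta by apply: ler_piMr => //; exact: ltW.
have := eta_lt1; rewrite gammaS; lra.
Qed.

Lemma gammaS_ge_half j : 1 / 2 <= gamma j.+1.
Proof.
rewrite gammaS; have : 0 <= eta * gamma j ^+ 2 by rewrite mulr_ge0 ?sqr_ge0 ?ltW.
lra.
Qed.

Lemma gamma_ltS j : gamma j < gamma j.+1.
Proof.
elim: j => [|j IH]; first by rewrite gammaS /= expr2 !mulr0 addr0; lra.
have sqr_lt : gamma j ^+ 2 < gamma j.+1 ^+ 2 by rewrite ltr_pXn2r ?nnegrE ?gamma_ge0.
have := gammaS j; have := gammaS j.+1.
have : eta * gamma j ^+ 2 < eta * gamma j.+1 ^+ 2 by rewrite ltr_pM2l.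
lra.
Qed.

Lemma le_gamma m n : (m <= n)%N -> gamma m <= gamma n.
Proof. by rewrite (Order.NatMonotonyTheory.incnP gamma_ltS). Qed.

Lemma IintS k :
  Iint eta k.+1 = ocint (eta * gamma k.+1 ^+ 2) (gamma k.+1 ^+ 2).
Proof. by rewrite /Iint /alpha /beta gammaS; congr ocint; lra. Qed.

Lemma twice_sqr_gamma_sub1_lt k :
  2 * gamma k.+1 ^+ 2 - 1 < eta ^+ 3 * gamma k.+1 ^+ 4.
Proof.
set c := gamma k.+1.
have c_half : 1 / 2 <= c := gammaS_ge_half k.
have c_lt1 : c < 1 := gamma_lt1 k.+1.
have inc : 2 * c - 1 < eta * c ^+ 2.
  by have := gamma_ltS k.+1; rewrite (gammaS k.+1) -/c; lra.
have cube_lt : (2 * c - 1) ^+ 3 < (eta * c ^+ 2) ^+ 3.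
  by rewrite ltrXn2r // subr_ge0; lra.
have poly : c ^+ 2 * (2 * c ^+ 2 - 1) <= (2 * c - 1) ^+ 3.
  by apply: cube_twice_sub1_ge; rewrite c_half ltW.
have c2_gt0 : 0 < c ^+ 2 by rewrite exprn_gt0 //; lra.
rewrite -(ltr_pM2l c2_gt0); apply: le_lt_trans poly _.
by have -> : c ^+ 2 * (eta ^+ 3 * c ^+ 4) = (eta * c ^+ 2) ^+ 3 by ring.
Qed.

Lemma Jint_not_subset_Iint k j : ~ (Jint eta j `<=` Iint eta k).
Proof.
case: k => [|k] sub.
  have [_ le_quarter] := ocint_subset_bounds (gamma_ltS j) sub.
  by have := gammaS_ge_half j; lra.
rewrite IintS in sub; set c := gamma k.+1 in sub.
have [left_le right_le] := ocint_subset_bounds (gamma_ltS j) sub.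
have := twice_sqr_gamma_sub1_lt k; rewrite -/c => lt.
have left_ge0 : 0 <= eta * c ^+ 2 by rewrite mulr_ge0 ?sqr_ge0 // ltW.
have sqr_le : (eta * c ^+ 2) ^+ 2 <= gamma j ^+ 2.
  by rewrite ler_pXn2r // nnegrE gamma_ge0.
have : eta * (eta * c ^+ 2) ^+ 2 <= eta * gamma j ^+ 2 by rewrite ler_pM2l.
rewrite gammaS in right_le.
have -> : eta * (eta * c ^+ 2) ^+ 2 = eta ^+ 3 * c ^+ 4 by ring.
lra.
Qed.

Lemma Iint_meets_at_most_two k j1 j2 j3 : (j1 < j2)%N -> (j2 < j3)%N ->
  ~ [/\ Iint eta k `&` Jint eta j1 !=set0,
        Iint eta k `&` Jint eta j2 !=set0 &
        Iint eta k `&` Jint eta j3 !=set0].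
Proof.
move=> lt12 lt23 [[z1 [I_z1 [_ z1_le]]] _ [z3 [I_z3 [z3_gt _]]]].
apply: (@Jint_not_subset_Iint k j2).
have [a [b Iab]] : exists a b, Iint eta k = ocint a b.
  by case: k {I_z1 I_z3} => [|k]; do 2 eexists.
rewrite Iab in I_z1 I_z3 *.
case: I_z1 I_z3 => [a_lt _] [_ le_b]; apply: subset_ocint.
- by have := le_gamma _ _ lt12; lra.
- by have := le_gamma _ _ lt23; lra.
Qed.

End Gamma.

Theorem mainTheorem15 (R : realType) (eta : R) (heta0 : 0 < eta) (heta1 : eta < 1) :
  (forall k j : nat, ~ (Jint eta j `<=` Iint eta k)) /\
  (forall k j1 j2 j3 : nat, (j1 < j2)%N -> (j2 < j3)%N ->
     ~ [/\ Iint eta k `&` Jint eta j1 !=set0,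
           Iint eta k `&` Jint eta j2 !=set0 &
           Iint eta k `&` Jint eta j3 !=set0]).
Proof.
split; [exact: Jint_not_subset_Iint | exact: Iint_meets_at_most_two].
Qed.
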